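(* At a positive, non-pinched, log-colored crossing the braiding $\tau\hat R$ factors as \[ \tau\hat R=\frac1N\,\mathcal Z_{\mathsf E}(\mathcal Z_{\mathsf N}\otimes\mathcal Z_{\mathsf S})\mathcal Z_{\mathsf W}, \] where \begin{align*} \mathcal Z_{\mathsf E}(\hat v_{n_1n_2})&=\Lambda(\zeta^0_{\mathsf E},\zeta^1_{\mathsf E}\mid n_1-n_2)^{-1}\hat v_{n_1n_2},\\ \mathcal Z_{\mathsf W}(\hat v_{n_1n_2})&=\omega^{-(N-1)(\zeta^0_{\mathsf W}+\zeta^1_{\mathsf W})}\,\omega^{n_2-n_1}\,\Lambda(\zeta^0_{\mathsf W},\zeta^1_{\mathsf W}\mid n_2-n_1-1)^{-1}\hat v_{n_1n_2},\\ \mathcal Z_{\mathsf N}(\hat v_n)&=\sum_{n'=0}^{N-1}\Lambda(\zeta^0_{\mathsf N},\zeta^1_{\mathsf N}\mid n'-n)\hat v_{n'},\qquad \mathcal Z_{\mathsf S}(\hat v_n)=\sum_{n'=0}^{N-1}\Lambda(\zeta^0_{\mathsf S},\zeta^1_{\mathsf S}\mid n-n')\hat v_{n'}. \end{align*} At a negative, non-pinched, log-colored crossing the braiding $\bar R\tau$ factors as \[ \bar R\tau=\frac1N\,\bar{\mathcal Z}_{\mathsf E}(\bar{\mathcal Z}_{\mathsf S}\otimes\bar{\mathcal Z}_{\mathsf N})\bar{\mathcal Z}_{\mathsf W}, \] where \begin{align*} \bar{\mathcal Z}_{\mathsf E}(\hat v_{n_1n_2})&=\omega^{(N-1)(\zeta^0_{\mathsf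 E}+\zeta^1_{\mathsf E})}\Lambda(\zeta^0_{\mathsf E},\zeta^1_{\mathsf E}\mid n_1-n_2-1)\hat v_{n_1n_2},\\ \bar{\mathcal Z}_{\mathsf W}(\hat v_{n_1n_2})&=\omega^{n_2-n_1}\Lambda(\zeta^0_{\mathsf W},\zeta^1_{\mathsf W}\mid n_2-n_1)\hat v_{n_1n_2},\\ \bar{\mathcal Z}_{\mathsf N}(\hat v_n)&=\omega^{-(N-1)(\zeta^0_{\mathsf N}+\zeta^1_{\mathsf N})}\sum_{n'}\Lambda(\zeta^0_{\mathsf N},\zeta^1_{\mathsf N}\mid n-n'-1)^{-1}\hat v_{n'},\\ \bar{\mathcal Z}_{\mathsf S}(\hat v_n)&=\omega^{-(N-1)(\zeta^0_{\mathsf S}+\zeta^1_{\mathsf S})}\sum_{n'}\Lambda(\zeta^0_{\mathsf S},\zeta^1_{\mathsf S}\mid n'-n-1)^{-1}\hat v_{n'}. \end{align*}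
   Context: $N\ge2$, $\omega=e^{2\pi i/N}$, $\omega^x=e^{2\pi ix/N}$. $V(\alpha,\beta,\mu)=\mathbb C^N$ with basis $\hat v_n$ ($n\in\mathbb Z/N$); $\hat v_{n_1n_2}=\hat v_{n_1}\otimes\hat v_{n_2}$; sums over indices run over $\mathbb Z/N$. Log-colored crossing of sign $\epsilon\in\{\pm1\}$: incoming segments $1,2$, outgoing $1',2'$ (1 continues as $1'$, 2 as $2'$), regions $\mathsf N,\mathsf W,\mathsf S,\mathsf E$ with incoming side reading ($\mathsf N$, 1, $\mathsf W$, 2, $\mathsf S$) and outgoing side ($\mathsf N$, $2'$, $\mathsf E$, $1'$, $\mathsf S$); complex numbers $\beta_s$ ($s\in\{1,2,1',2'\}$), $\gamma_{\mathsf N},\gamma_{\mathsf W},\gamma_{\mathsf S},\gamma_{\mathsf E}$, $\mu_1,\mu_2$. Put $\alpha_1=\gamma_{\mathsf W}-\gamma_{\mathsf N}$, $\alpha_2=\gamma_{\mathsf S}-\gamma_{\mathsf W}$, $\alpha_{2'}=\gamma_{\mathsf E}-\gamma_{\mathsf N}$, $\alpha_{1'}=\gamma_{\mathsf S}-\gamma_{\mathsf E}$, $a_s=e^{2\pi i\alpha_s}$, $b_s=e^{2\pi i\beta_s}$, $m_j=e^{2\pi i\mu_j}$. Required (all values nonzero, finite): if $\epsilon=+1$, $a_{1'}=a_1/A$, $a_{2'}=a_2A$, $A=1-\frac{m_1b_1}{b_2}(1-\frac{a_1}{m_1})(1-\frac1{m_2a_2})$, $b_{1'}=\frac{m_2b_2}{m_1}(1-m_2a_2(1-\frac{b_2}{m_1b_1}))^{-1}$,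 $b_{2'}=b_1(1-\frac{m_1}{a_1}(1-\frac{b_2}{m_1b_1}))$; if $\epsilon=-1$, $a_{1'}=a_1/\tilde A$, $a_{2'}=a_2\tilde A$, $\tilde A=1-\frac{b_2}{m_1b_1}(1-m_1a_1)(1-\frac{m_2}{a_2})$, $b_{1'}=\frac{m_2b_2}{m_1}(1-\frac{a_2}{m_2}(1-\frac{m_1b_1}{b_2}))$, $b_{2'}=b_1(1-\frac1{m_1a_1}(1-\frac{m_1b_1}{b_2}))^{-1}$. Segment $s$ carries $V(\alpha_s,\beta_s,\mu_s)$ with $\mu_{1'}=\mu_1,\mu_{2'}=\mu_2$. Define $\zeta^0_{\mathsf N}=\epsilon(\beta_{2'}-\beta_1)$, $\zeta^0_{\mathsf W}=\epsilon(\beta_2-\beta_1-\mu_1)$, $\zeta^0_{\mathsf S}=\epsilon(\beta_2-\beta_{1'}+\mu_2-\mu_1)$, $\zeta^0_{\mathsf E}=\epsilon(\beta_{2'}-\beta_{1'}+\mu_2)$; the crossing is pinched if some $\zeta^0_j\in\mathbb Z$. If not pinched, choose $\kappa$ with $e^{2\pi i\kappa}=e^{2\pi i\gamma_{\mathsf N}}/(1-(b_{2'}/b_1)^\epsilon)$ and set $\zeta^1_{\mathsf N}=\kappa-\gamma_{\mathsf N}$, $\zeta^1_{\mathsf W}=\kappa-\gamma_{\mathsf W}+\epsilon\mu_1$, $\zeta^1_{\mathsf S}=\kappa-\gamma_{\mathsf S}+\epsilon(\mu_1-\mu_2)$, $\zeta^1_{\mathsf E}=\kappa-\gamma_{\mathsf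 E}-\epsilon\mu_2$, so $e^{2\pi i\zeta^1_j}=1/(1-e^{2\pi i\zeta^0_j})$. Quantum dilogarithm: $\Phi_{\mathsf b}(z)=\exp\int_{\mathbb R+i0}\frac{e^{-2izw}}{4\sinh(w\mathsf b)\sinh(w/\mathsf b)}\frac{dw}{w}$ (meromorphically continued), $c=\frac i2(\sqrt N+1/\sqrt N)$, $\Lambda(\zeta)=\Phi_{\sqrt N}(i\zeta/\sqrt N-c+i/\sqrt N)$, and for $e^{2\pi i\zeta^1}=1/(1-e^{2\pi i\zeta^0})$, $n\in\mathbb Z$: $\Lambda(\zeta^0,\zeta^1\mid n)=\omega^{-\zeta^0\zeta^1/2}\omega^{-n\zeta^1}\Lambda(\zeta^0+n)$ (this is $N$-periodic in $n$). $R$-matrices: for $\epsilon=+1$, $\hat R_{n_1n_2}^{n_1'n_2'}=\frac{\omega^{-(N-1)(\zeta^0_{\mathsf W}+\zeta^1_{\mathsf W})}}N\omega^{n_2-n_1}\frac{\Lambda(\zeta^0_{\mathsf N},\zeta^1_{\mathsf N}\mid n_2'-n_1)\Lambda(\zeta^0_{\mathsf S},\zeta^1_{\mathsf S}\mid n_2-n_1')}{\Lambda(\zeta^0_{\mathsf W},\zeta^1_{\mathsf W}\mid n_2-n_1-1)\Lambda(\zeta^0_{\mathsf E},\zeta^1_{\mathsf E}\mid n_2'-n_1')}$; for $\epsilon=-1$, $\bar R_{n_1n_2}^{n_1'n_2'}=\frac{\omega^{(N-1)(\zeta^0_{\mathsf E}+\zeta^1_{\mathsf E}-\zeta^0_{\mathsf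 S}-\zeta^1_{\mathsf S}-\zeta^0_{\mathsf N}-\zeta^1_{\mathsf N})}}N\omega^{n_1-n_2}\frac{\Lambda(\zeta^0_{\mathsf W},\zeta^1_{\mathsf W}\mid n_1-n_2)\Lambda(\zeta^0_{\mathsf E},\zeta^1_{\mathsf E}\mid n_1'-n_2'-1)}{\Lambda(\zeta^0_{\mathsf N},\zeta^1_{\mathsf N}\mid n_1-n_2'-1)\Lambda(\zeta^0_{\mathsf S},\zeta^1_{\mathsf S}\mid n_1'-n_2-1)}$. With $M(\hat v_{n_1n_2})=\sum M_{n_1n_2}^{n_1'n_2'}\hat v_{n_1'n_2'}$ for $M=\hat R,\bar R$ and $\tau$ the flip of tensor factors, the braiding is $\tau\hat R$ for $\epsilon=+1$ (i.e. $\hat v_{n_1n_2}\mapsto\sum\hat R_{n_1n_2}^{n_1'n_2'}\hat v_{n_2'}\otimes\hat v_{n_1'}$) and $\bar R\tau$ for $\epsilon=-1$. *)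

From Stdlib Require Import Reals ZArith Arith.
From Coquelicot Require Import Coquelicot.

Open Scope C_scope.

Definition Cexp (z : C) : C :=
  RtoC (exp (Re z) * cos (Im z))%R + Ci * RtoC (exp (Re z) * sin (Im z))%R.

Definition e2pi (x : C) : C := Cexp (2 * RtoC PI * Ci * x).

Definition omega_pow (N : nat) (x : C) : C := Cexp (2 * RtoC PI * Ci * x / RtoC (INR N)).

Definition Csinh (w : C) : C := (Cexp w - Cexp (- w)) / 2.

(** * Faddeev's quantum dilogarithm Phi_b (b > 0)
    Phi_b(z) = exp \int_{R+i0} e^{-2izw} / (4 sinh(wb) sinh(w/b)) dw/w
    for |Im z| < (b+1/b)/2, meromorphically continued.  The contour R+i0 is
    realised as R + i delta with 0 < delta < pi*min(b,1/b) (no pole of the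
    integrand in 0 < Im w <= delta).  The continuation is characterized
    through the functional equations
      Phi(z - i b^{+-1}/2) = (1 + e^{2 pi b^{+-1} z}) Phi(z + i b^{+-1}/2),
    imposed wherever neither side is at a pole of Phi_b
    (poles: c_b + i m b + i n/b, m,n >= 0, c_b = i(b+1/b)/2). *)
Definition qdl_integrand (b : R) (z w : C) : C :=
  Cexp (- 2 * Ci * z * w) / (4 * Csinh (w * RtoC b) * Csinh (w / RtoC b) * w).

Definition qdl_cb (b : R) : C := Ci * RtoC ((b + / b) / 2)%R.

Definition qdl_pole (b : R) (z : C) : Prop :=
  exists m n : nat, z = qdl_cb b + Ci * RtoC (INR m * b + INR n / b)%R.

Definition is_Faddeev_qdilog (b : R) (Phi : C -> C) : Prop :=
  (forall (z : C) (delta : R),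
      (Rabs (Im z) < (b + / b) / 2)%R ->
      (0 < delta < PI * Rmin b (/ b))%R ->
      exists l : C,
        is_RInt_gen (fun t : R => qdl_integrand b z (RtoC t + Ci * RtoC delta))
          (Rbar_locally m_infty) (Rbar_locally p_infty) l
        /\ Phi z = Cexp l)
  /\ (forall (z : C) (s : R), (s = b \/ s = / b)%R ->
      ~ qdl_pole b (z - Ci * RtoC s / 2) -> ~ qdl_pole b (z + Ci * RtoC s / 2) ->
      Phi (z - Ci * RtoC s / 2) =
        (1 + Cexp (2 * RtoC PI * RtoC s * z)) * Phi (z + Ci * RtoC s / 2)).

Definition cN (N : nat) : C := Ci * RtoC ((sqrt (INR N) + / sqrt (INR N)) / 2)%R.

Definition Lam (N : nat) (Phi : C -> C) (zeta : C) : C :=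
  Phi (Ci * zeta / RtoC (sqrt (INR N)) - cN N + Ci / RtoC (sqrt (INR N))).

Definition Lam2 (N : nat) (Phi : C -> C) (z0 z1 : C) (n : Z) : C :=
  omega_pow N (- (z0 * z1) / 2) * omega_pow N (- (RtoC (IZR n)) * z1)
  * Lam N Phi (z0 + RtoC (IZR n)).

Record crossing := Crossing {
  gN : C; gW : C; gS : C; gE : C;
  be1 : C; be2 : C; be1' : C; be2' : C;
  mu1 : C; mu2 : C }.

Definition al1  (x : crossing) : C := gW x - gN x.
Definition al2  (x : crossing) : C := gS x - gW x.
Definition al2' (x : crossing) : C := gE x - gN x.
Definition al1' (x : crossing) : C := gS x - gE x.

Definition sgn (pos : bool) : C := if pos then 1 else -1.

Definition log_colored (pos : bool) (x : crossing) : Prop :=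
  let a1 := e2pi (al1 x) in let a2 := e2pi (al2 x) in
  let a1' := e2pi (al1' x) in let a2' := e2pi (al2' x) in
  let b1 := e2pi (be1 x) in let b2 := e2pi (be2 x) in
  let b1' := e2pi (be1' x) in let b2' := e2pi (be2' x) in
  let m1 := e2pi (mu1 x) in let m2 := e2pi (mu2 x) in
  if pos then
    let A := 1 - m1 * b1 / b2 * (1 - a1 / m1) * (1 - 1 / (m2 * a2)) in
    A <> 0 /\ a1' = a1 / A /\ a2' = a2 * A
    /\ (1 - m2 * a2 * (1 - b2 / (m1 * b1))) <> 0
    /\ b1' = m2 * b2 / m1 / (1 - m2 * a2 * (1 - b2 / (m1 * b1)))
    /\ b2' = b1 * (1 - m1 / a1 * (1 - b2 / (m1 * b1)))
  else
    let At := 1 - b2 / (m1 * b1) * (1 - m1 * a1) * (1 - m2 / a2) in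
    At <> 0 /\ a1' = a1 / At /\ a2' = a2 * At
    /\ b1' = m2 * b2 / m1 * (1 - a2 / m2 * (1 - m1 * b1 / b2))
    /\ (1 - 1 / (m1 * a1) * (1 - m1 * b1 / b2)) <> 0
    /\ b2' = b1 / (1 - 1 / (m1 * a1) * (1 - m1 * b1 / b2)).

Inductive region := RN | RW | RS | RE.

Definition zeta0 (pos : bool) (x : crossing) (j : region) : C :=
  let e := sgn pos in
  match j with
  | RN => e * (be2' x - be1 x)
  | RW => e * (be2 x - be1 x - mu1 x)
  | RS => e * (be2 x - be1' x + mu2 x - mu1 x)
  | RE => e * (be2' x - be1' x + mu2 x)
  end.

Definition pinched (pos : bool) (x : crossing) : Prop :=
  exists (j : region) (k : Z), zeta0 pos x j = RtoC (IZR k).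

Definition kappa_ok (pos : bool) (x : crossing) (kappa : C) : Prop :=
  let r := if pos then e2pi (be2' x) / e2pi (be1 x) else e2pi (be1 x) / e2pi (be2' x) in
  e2pi kappa = e2pi (gN x) / (1 - r).

Definition zeta1 (pos : bool) (x : crossing) (kappa : C) (j : region) : C :=
  let e := sgn pos in
  match j with
  | RN => kappa - gN x
  | RW => kappa - gW x + e * mu1 x
  | RS => kappa - gS x + e * (mu1 x - mu2 x)
  | RE => kappa - gE x - e * mu2 x
  end.

Definition LamR (N : nat) (Phi : C -> C) (pos : bool) (x : crossing) (kappa : C)
    (j : region) (n : Z) : C :=
  Lam2 N Phi (zeta0 pos x j) (zeta1 pos x kappa j) n.

(** * Operators on V = C^N and V (x) V, in the basis hat v_n, n = 0..N-1
    (representatives of Z/N).  An operator M on V is given by its matrix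
    coefficients: M n n' = coefficient of hat v_{n'} in M(hat v_n).
    An operator on V (x) V: M n1 n2 m1 m2 = coefficient of hat v_{m1 m2}
    in M(hat v_{n1 n2}). *)
Definition op1 := nat -> nat -> C.
Definition op2 := nat -> nat -> nat -> nat -> C.

Definition sumN (N : nat) (f : nat -> C) : C := sum_n f (pred N).

(** composition: (compose2 N A B) = B o A  (A applied first) *)
Definition compose2 (N : nat) (A B : op2) : op2 :=
  fun n1 n2 r1 r2 => sumN N (fun q1 => sumN N (fun q2 => A n1 n2 q1 q2 * B q1 q2 r1 r2)).

Definition tensor (A B : op1) : op2 := fun n1 n2 m1 m2 => A n1 m1 * B n2 m2.

Definition diag2 (f : nat -> nat -> C) : op2 :=
  fun n1 n2 m1 m2 => if (Nat.eqb n1 m1 && Nat.eqb n2 m2)%bool then f n1 n2 else 0.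

Definition zdiff (a b : nat) : Z := (Z.of_nat a - Z.of_nat b)%Z.

Definition Rhat (N : nat) (Phi : C -> C) (x : crossing) (kappa : C)
    (n1 n2 n1' n2' : nat) : C :=
  let L := LamR N Phi true x kappa in
  omega_pow N (- (RtoC (INR N) - 1) * (zeta0 true x RW + zeta1 true x kappa RW))
  / RtoC (INR N)
  * omega_pow N (RtoC (IZR (zdiff n2 n1)))
  * (L RN (zdiff n2' n1) * L RS (zdiff n2 n1'))
  / (L RW (zdiff n2 n1 - 1)%Z * L RE (zdiff n2' n1')).

Definition Rbar (N : nat) (Phi : C -> C) (x : crossing) (kappa : C)
    (n1 n2 n1' n2' : nat) : C :=
  let L := LamR N Phi false x kappa in
  let z := fun j => zeta0 false x j + zeta1 false x kappa j in
  omega_pow N ((RtoC (INR N) - 1) * (z RE - z RS - z RN))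
  / RtoC (INR N)
  * omega_pow N (RtoC (IZR (zdiff n1 n2)))
  * (L RW (zdiff n1 n2) * L RE (zdiff n1' n2' - 1)%Z)
  / (L RN (zdiff n1 n2' - 1)%Z * L RS (zdiff n1' n2 - 1)%Z).

(** braiding tau Rhat : hat v_{n1 n2} |-> sum Rhat_{n1n2}^{n1'n2'} hat v_{n2'} (x) hat v_{n1'} *)
Definition braid_pos (N : nat) (Phi : C -> C) (x : crossing) (kappa : C) : op2 :=
  fun n1 n2 m1 m2 => Rhat N Phi x kappa n1 n2 m2 m1.

(** braiding Rbar tau : hat v_{n1 n2} |-> Rbar(hat v_{n2 n1}) *)
Definition braid_neg (N : nat) (Phi : C -> C) (x : crossing) (kappa : C) : op2 :=
  fun n1 n2 m1 m2 => Rbar N Phi x kappa n2 n1 m1 m2.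

Definition op2_scale (c : C) (A : op2) : op2 := fun n1 n2 m1 m2 => c * A n1 n2 m1 m2.

Definition ZE_pos N Phi x kappa : op2 :=
  diag2 (fun n1 n2 => / LamR N Phi true x kappa RE (zdiff n1 n2)).
Definition ZW_pos N Phi x kappa : op2 :=
  diag2 (fun n1 n2 =>
    omega_pow N (- (RtoC (INR N) - 1) * (zeta0 true x RW + zeta1 true x kappa RW))
    * omega_pow N (RtoC (IZR (zdiff n2 n1)))
    * / LamR N Phi true x kappa RW (zdiff n2 n1 - 1)%Z).
Definition ZN_pos N Phi x kappa : op1 :=
  fun n n' => LamR N Phi true x kappa RN (zdiff n' n).
Definition ZS_pos N Phi x kappa : op1 :=
  fun n n' => LamR N Phi true x kappa RS (zdiff n n').

Definition ZE_neg N Phi x kappa : op2 :=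
  diag2 (fun n1 n2 =>
    omega_pow N ((RtoC (INR N) - 1) * (zeta0 false x RE + zeta1 false x kappa RE))
    * LamR N Phi false x kappa RE (zdiff n1 n2 - 1)%Z).
Definition ZW_neg N Phi x kappa : op2 :=
  diag2 (fun n1 n2 =>
    omega_pow N (RtoC (IZR (zdiff n2 n1)))
    * LamR N Phi false x kappa RW (zdiff n2 n1)).
Definition ZN_neg N Phi x kappa : op1 :=
  fun n n' =>
    omega_pow N (- (RtoC (INR N) - 1) * (zeta0 false x RN + zeta1 false x kappa RN))
    * / LamR N Phi false x kappa RN (zdiff n n' - 1)%Z.
Definition ZS_neg N Phi x kappa : op1 :=
  fun n n' =>
    omega_pow N (- (RtoC (INR N) - 1) * (zeta0 false x RS + zeta1 false x kappa RS))
    * / LamR N Phi false x kappa RS (zdiff n' n - 1)%Z.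

(* Every R-matrix entry is a product of four factors, depending on (n1, n2), on
   the pairs linking an incoming to an outgoing strand, and on (n1', n2'),
   respectively.  Composing with a diagonal operator multiplies the entries by
   its diagonal, so both factorizations are entrywise identities in the field C;
   only for the negative crossing must the scalar phase be split among the three
   factors carrying it.  The colouring, non-pinching and Faddeev hypotheses just
   make the Lambda-values meaningful: since [/ 0 = 0] in C, the identities hold
   regardless. *)

From Pilot Require Import Defs.
From Stdlib Require Import Reals ZArith Arith Lia.
From Coquelicot Require Import Coquelicot.
Open Scope C_scope.

Lemma Cinv_0 : / (0 : C) = 0.
Proof.
  unfold Cinv; simpl; unfold Rdiv; rewrite !Rmult_0_l.
  apply injective_projections; simpl; ring.
Qed.

Lemma Cinv_mult (a b : C) : / (a * b) = / a * / b.
Proof.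
  destruct (Ceq_dec a 0) as [-> | Ha].
  { rewrite Cmult_0_l, Cinv_0; ring. }
  destruct (Ceq_dec b 0) as [-> | Hb].
  { rewrite Cmult_0_r, Cinv_0; ring. }
  field; split; assumption.
Qed.

Lemma Cexp_add (a b : C) : Cexp (a + b) = Cexp a * Cexp b.
Proof.
  destruct a as [ar ai], b as [br bi]; unfold Cexp; simpl.
  rewrite exp_plus, cos_plus, sin_plus.
  apply injective_projections; simpl; ring.
Qed.

Lemma omega_pow_add (N : nat) (a b : C) :
  omega_pow N (a + b) = omega_pow N a * omega_pow N b.
Proof. unfold omega_pow; rewrite <- Cexp_add; f_equal; unfold Cdiv; ring. Qed.

Lemma omega_pow_scale_sub3 (N : nat) (c a b d : C) :
  omega_pow N (c * (a - b - d))
  = omega_pow N (- c * b) * omega_pow N (- c * d) * omega_pow N (c * a).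
Proof. rewrite <- !omega_pow_add; f_equal; ring. Qed.

Lemma sum_n_eq_zero (f : nat -> C) (m : nat) :
  (forall j, (j <= m)%nat -> f j = 0) -> @eq C (sum_n f m) 0.
Proof.
  intros Hf; induction m as [| m IH].
  - rewrite sum_O; apply Hf; lia.
  - rewrite sum_Sn, IH by (intros; apply Hf; lia).
    rewrite Hf by lia.
    change (0 + 0 = (0 : C)); ring.
Qed.

Lemma sum_n_single (f : nat -> C) (m k : nat) :
  (k <= m)%nat -> (forall j, j <> k -> f j = 0) -> sum_n f m = f k.
Proof.
  intros Hk Hf; induction m as [| m IH].
  - replace k with 0%nat by lia; apply sum_O.
  - rewrite sum_Sn; destruct (Nat.eq_dec k (S m)) as [-> | Hne].
    + rewrite sum_n_eq_zero by (intros; apply Hf; lia).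
      change (0 + f (S m) = f (S m)); ring.
    + rewrite IH, (Hf (S m)) by lia.
      change (f k + 0 = f k); ring.
Qed.

Lemma sumN2_single (N : nat) (F : nat -> nat -> C) (k1 k2 : nat) :
  (k1 < N)%nat -> (k2 < N)%nat ->
  (forall j1 j2, j1 <> k1 \/ j2 <> k2 -> F j1 j2 = 0) ->
  sumN N (fun q1 => sumN N (fun q2 => F q1 q2)) = F k1 k2.
Proof.
  intros Hk1 Hk2 HF; unfold sumN.
  rewrite (sum_n_single _ _ k1) by
    (lia || (intros j Hj; apply sum_n_eq_zero; intros; apply HF; auto)).
  apply sum_n_single; [lia |].
  intros; apply HF; auto.
Qed.

Lemma diag2_on (f : nat -> nat -> C) (a b : nat) : diag2 f a b a b = f a b.
Proof. unfold diag2; rewrite !Nat.eqb_refl; reflexivity. Qed.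

Lemma diag2_off (f : nat -> nat -> C) (a b c d : nat) :
  a <> c \/ b <> d -> diag2 f a b c d = 0.
Proof.
  intros H; unfold diag2.
  destruct (Nat.eqb_spec a c), (Nat.eqb_spec b d); simpl; auto; lia.
Qed.

Lemma compose2_diag2_l (N : nat) (f : nat -> nat -> C) (A : op2) (n1 n2 r1 r2 : nat) :
  (n1 < N)%nat -> (n2 < N)%nat ->
  compose2 N (diag2 f) A n1 n2 r1 r2 = f n1 n2 * A n1 n2 r1 r2.
Proof.
  intros Hn1 Hn2; unfold compose2.
  rewrite (sumN2_single N _ n1 n2) by
    (auto; intros j1 j2 Hj; rewrite diag2_off by lia; ring).
  rewrite diag2_on; reflexivity.
Qed.

Lemma compose2_diag2_r (N : nat) (A : op2) (g : nat -> nat -> C) (n1 n2 r1 r2 : nat) :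
  (r1 < N)%nat -> (r2 < N)%nat ->
  compose2 N A (diag2 g) n1 n2 r1 r2 = A n1 n2 r1 r2 * g r1 r2.
Proof.
  intros Hr1 Hr2; unfold compose2.
  rewrite (sumN2_single N _ r1 r2) by
    (auto; intros j1 j2 Hj; rewrite diag2_off by lia; ring).
  rewrite diag2_on; reflexivity.
Qed.

Theorem theorem4p3 (N : nat) (Phi : C -> C) :
  (2 <= N)%nat ->
  is_Faddeev_qdilog (sqrt (INR N)) Phi ->
  (forall (x : crossing) (kappa : C),
     log_colored true x -> ~ pinched true x -> kappa_ok true x kappa ->
     forall n1 n2 m1 m2 : nat, (n1 < N)%nat -> (n2 < N)%nat -> (m1 < N)%nat -> (m2 < N)%nat ->
     braid_pos N Phi x kappa n1 n2 m1 m2 =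
     op2_scale (/ RtoC (INR N))
       (compose2 N (compose2 N (ZW_pos N Phi x kappa)
                               (tensor (ZN_pos N Phi x kappa) (ZS_pos N Phi x kappa)))
                   (ZE_pos N Phi x kappa)) n1 n2 m1 m2)
  /\
  (forall (x : crossing) (kappa : C),
     log_colored false x -> ~ pinched false x -> kappa_ok false x kappa ->
     forall n1 n2 m1 m2 : nat, (n1 < N)%nat -> (n2 < N)%nat -> (m1 < N)%nat -> (m2 < N)%nat ->
     braid_neg N Phi x kappa n1 n2 m1 m2 =
     op2_scale (/ RtoC (INR N))
       (compose2 N (compose2 N (ZW_neg N Phi x kappa)
                               (tensor (ZS_neg N Phi x kappa) (ZN_neg N Phi x kappa)))
                   (ZE_neg N Phi x kappa)) n1 n2 m1 m2).
Proof.
  intros _ _.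
  split; intros x kappa _ _ _ n1 n2 m1 m2 Hn1 Hn2 Hm1 Hm2.
  - unfold op2_scale, ZE_pos, ZW_pos.
    rewrite compose2_diag2_r, compose2_diag2_l by assumption.
    unfold braid_pos, Rhat, tensor, ZN_pos, ZS_pos, Cdiv.
    rewrite !Cinv_mult; ring.
  - unfold op2_scale, ZE_neg, ZW_neg.
    rewrite compose2_diag2_r, compose2_diag2_l by assumption.
    unfold braid_neg, Defs.Rbar, tensor, ZN_neg, ZS_neg, Cdiv.
    rewrite omega_pow_scale_sub3, !Cinv_mult; ring.
Qed.
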